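(* Let $p_1,\dots,p_m$ be discrete probability distributions each with (at most) $n$ states. Then there exists a minimum-entropy coupling of $p_1,\dots,p_m$ whose support (number of tuples with nonzero probability) has size at most $nm-(m-1)$.
   Context: A coupling of $p_1,\dots,p_m$ is a joint probability distribution $\mathbf P(i_1,\dots,i_m)$ on $[n]^m$ whose $k$-th marginal equals $p_k$ for every $k$ (distributions with fewer states are padded with zero-probability states). A minimum-entropy coupling minimizes the Shannon entropy $\sum_i \mathbf P(i)\log_2(1/\mathbf P(i))$ among all couplings. *)

From mathcomp Require Import all_boot all_order all_algebra.
From mathcomp Require Import reals exp.
Set Implicit Arguments. Unset Strict Implicit. Unset Printing Implicit Defensive.
Import Order.TTheory GRing.Theory Num.Theory.
Local Open Scope ring_scope.

(* A probability distribution on the states 'I_n (padded with zeros if fewer). *)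
Definition is_distr (R : realType) (n : nat) (p : {ffun 'I_n -> R}) : Prop :=
  (forall i, 0 <= p i) /\ \sum_(i < n) p i = 1.

Definition tuples (m n : nat) := {ffun 'I_m -> 'I_n}.

Definition is_coupling (R : realType) (m n : nat) (p : 'I_m -> {ffun 'I_n -> R})
    (P : {ffun tuples m n -> R}) : Prop :=
  [/\ (forall t, 0 <= P t), \sum_(t : tuples m n) P t = 1 &
      forall (k : 'I_m) (j : 'I_n), \sum_(t : tuples m n | t k == j) P t = p k j].

Definition log2 (R : realType) (x : R) : R := ln x / ln 2.

Definition entropy (R : realType) (m n : nat) (P : {ffun tuples m n -> R}) : R :=
  \sum_(t : tuples m n) (if P t == 0 then 0 else P t * log2 (P t)^-1).

Definition is_min_entropy_coupling (R : realType) (m n : nat)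
    (p : 'I_m -> {ffun 'I_n -> R}) (P : {ffun tuples m n -> R}) : Prop :=
  is_coupling p P /\ forall Q, is_coupling p Q -> entropy P <= entropy Q.

Definition support_size (R : realType) (m n : nat) (P : {ffun tuples m n -> R}) : nat :=
  #|[set t : tuples m n | P t != 0]|.

(* Couplings form a polytope cut out by m (n - 1) + 1 linear equations (total mass,
   and for each k the marginals of all but one state).  Entropy is concave, so pushing
   a non-vertex coupling along a zero-marginal direction supported in its support, in
   the better of the two directions, until some coordinate vanishes does not increase
   entropy and shrinks the support: every coupling is dominated by a vertex.  A vertex
   is determined by its support, so there are finitely many and one of them minimises
   entropy; and a vertex has at most as many nonzero coordinates as there are
   equations. *)

From mathcomp Require Import all_boot all_order all_algebra.
From mathcomp Require Import boolp reals exp.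
From mathcomp Require Import ring lra zify.
Set Implicit Arguments. Unset Strict Implicit. Unset Printing Implicit Defensive.
Import Order.TTheory GRing.Theory Num.Theory.
Local Open Scope ring_scope.

Section XLnX.
Variable R : realType.

Lemma xlnx_tangent (x c : R) : 0 <= x -> 0 < c -> x * ln c + x - c <= x * ln x.
Proof.
move=> x_ge0 c_gt0; have [->|x_neq0] := eqVneq x 0; first by lra.
have x_gt0 : 0 < x by rewrite lt_def x_neq0.
have := @le_ln1Dx R (c / x - 1); rewrite addrCA subrr addr0 ln_div ?posrE //.
rewrite ltrBrDl subrr divr_gt0 // => /(_ isT)/(ler_wpM2l (ltW x_gt0)).
rewrite mulrBr mulrBr mulrCA divff ?mulr1 //; lra.
Qed.

Lemma xlnx_convex (a b x y : R) : 0 <= a -> 0 <= b -> a + b = 1 -> 0 <= x -> 0 <= y ->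
  (a * x + b * y) * ln (a * x + b * y) <= a * (x * ln x) + b * (y * ln y).
Proof.
move=> a_ge0 b_ge0 ab1 x_ge0 y_ge0; set c := a * x + b * y.
have [c0|c_neq0] := eqVneq c 0.
  have /andP[/eqP ax0 /eqP by0] : (a * x == 0) && (b * y == 0).
    by rewrite -paddr_eq0 ?mulr_ge0 // -/c c0.
  by rewrite c0 mul0r !mulrA ax0 by0 !mul0r addr0.
have c_gt0 : 0 < c by rewrite lt_def c_neq0 addr_ge0 ?mulr_ge0.
have -> : c * ln c = a * (x * ln c + x - c) + b * (y * ln c + y - c).
  rewrite /c; have -> : b = 1 - a by lra.
  by ring.
by apply: lerD; apply: ler_wpM2l => //; apply: xlnx_tangent.
Qed.

End XLnX.

Section Entropy.
Variables (R : realType) (m n : nat).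
Local Notation T := (tuples m n).

Lemma entropyE (Q : {ffun T -> R}) : (forall t, 0 <= Q t) ->
  entropy Q = - (\sum_t Q t * ln (Q t)) / ln 2.
Proof.
move=> Q_ge0; rewrite /entropy mulNr mulr_suml -sumrN; apply: eq_bigr => t _.
have [->|Qt_neq0] := eqVneq (Q t) 0; first by rewrite !mul0r oppr0.
have Qt_gt0 : 0 < Q t by rewrite lt_def Qt_neq0 Q_ge0.
by rewrite /log2 lnV ?posrE // mulNr mulrN mulrA.
Qed.

Lemma entropy_concave (Q1 Q2 : {ffun T -> R}) (a b : R) :
  0 <= a -> 0 <= b -> a + b = 1 -> (forall t, 0 <= Q1 t) -> (forall t, 0 <= Q2 t) ->
  a * entropy Q1 + b * entropy Q2 <= entropy [ffun t => a * Q1 t + b * Q2 t].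
Proof.
move=> a_ge0 b_ge0 ab1 Q1_ge0 Q2_ge0.
have Q_ge0 t : 0 <= [ffun t => a * Q1 t + b * Q2 t] t.
  by rewrite ffunE addr_ge0 ?mulr_ge0.
rewrite !entropyE // !mulrA !mulrN -mulrDl -opprD ler_pM2r ?invr_gt0 ?ln_gt0 ?ltr1n //.
rewrite lerN2 !mulr_sumr -big_split; apply: ler_sum => t _; rewrite ffunE.
exact: xlnx_convex.
Qed.

End Entropy.

Section Finite.
Variable R : realType.

Lemma ex_minimizer_injective_key (X : finType) (A : Type) (P : A -> Prop)
    (key : A -> X) (v : A -> R) :
  (forall a b, P a -> P b -> key a = key b -> a = b) -> (exists a, P a) ->
  exists2 a, P a & forall b, P b -> v a <= v b.
Proof.
move=> key_inj [a0 Pa0].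
pose pre x := if pselect (exists a, P a /\ key a = x) is left h then sval (cid h) else a0.
have preP x : (exists a, P a /\ key a = x) -> P (pre x) /\ key (pre x) = x.
  by rewrite /pre; case: pselect => // h _; exact: svalP (cid h).
have preK b : P b -> pre (key b) = b.
  by move=> Pb; have [Ppre /key_inj] := preP (key b) (ex_intro _ b (conj Pb erefl)); apply.
pose K x := `[< exists a, P a /\ key a = x >].
have inK b : P b -> K (key b) by move=> Pb; apply/asboolP; exists b.
case: (arg_minP (fun x => v (pre x)) (inK a0 Pa0)) => x /asboolP/preP[Px _] min_x.
by exists (pre x) => // b Pb; rewrite -(preK b Pb); apply: min_x; apply: inK.
Qed.

Lemma ex_neg_entry (X : finType) (d : X -> R) :
  \sum_x d x = 0 -> (exists x, d x != 0) -> exists x, d x < 0.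
Proof.
move=> d_sum0 [x dx_neq0]; apply: contrapT => no_neg.
have d_ge0 y : true -> 0 <= d y.
  by move=> _; rewrite leNgt; apply/negP => dy_lt0; apply: no_neg; exists y.
by move: dx_neq0; rewrite (psumr_eq0P d_ge0 d_sum0) ?eqxx.
Qed.

Lemma ray_exit (X : finType) (q d : X -> R) :
  (forall x, 0 <= q x) -> (forall x, q x = 0 -> d x = 0) -> (exists x, d x < 0) ->
  exists2 l, 0 < l &
    (forall x, 0 <= q x + l * d x) /\ exists2 x0, q x0 != 0 & q x0 + l * d x0 = 0.
Proof.
move=> q_ge0 d_supp [x1 dx1_lt0].
case: (arg_minP (fun x => q x / - d x) (dx1_lt0 : x1 \in [pred x | d x < 0])) => x0 /=.
move=> dx0_lt0 min_x0; have qx0_neq0 : q x0 != 0.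
  by apply: contraTneq dx0_lt0 => /d_supp ->; rewrite ltxx.
have qx0_gt0 : 0 < q x0 by rewrite lt_def qx0_neq0 q_ge0.
exists (q x0 / - d x0); first by rewrite divr_gt0 ?oppr_gt0.
split; last first.
  by exists x0; rewrite // invrN mulrN mulNr -mulrA mulVf ?mulr1 ?subrr ?lt_eqF.
move=> x; have [dx_lt0|dx_ge0] := ltP (d x) 0.
  by have := min_x0 x dx_lt0; rewrite ler_pdivlMr ?oppr_gt0 // mulrN; lra.
by rewrite addr_ge0 // mulr_ge0 // ltW // divr_gt0 ?oppr_gt0.
Qed.

Lemma ex_kernel_vector (I C : finType) (S : {set I}) (A : I -> C -> R) :
  (#|C| < #|S|)%N ->
  exists2 u : {ffun I -> R}, u != 0 &
    (forall i, i \notin S -> u i = 0) /\ forall c, \sum_i u i * A i c = 0.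
Proof.
move=> ltCS; have [i0 i0S] : exists i0, i0 \in S.
  by apply/card_gt0P; apply: leq_ltn_trans ltCS.
pose M := \matrix_(k < #|S|, c < #|C|) A (enum_val k) (enum_val c).
have /rowV0Pn[v /sub_kermxP vM0 v_neq0] : kermx M != 0.
  by rewrite kermx_eq0 /row_free neq_ltn (leq_ltn_trans (rank_leq_col M) ltCS).
pose h := enum_rank_in i0S.
exists [ffun i => if i \in S then v 0 (h i) else 0].
  move: v_neq0 => /rV0Pn[k vk_neq0]; apply: contraNneq vk_neq0 => /ffunP.
  by move=> /(_ (enum_val k)); rewrite !ffunE enum_valP /h enum_valK_in => ->.
split=> [i /negbTE iS|c]; first by rewrite ffunE iS.
move/matrixP: vM0 => /(_ 0 (enum_rank c)); rewrite !mxE => vMc0; rewrite -[RHS]vMc0.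
rewrite [RHS](big_enum_rank i0S) /= [RHS]big_mkcond; apply: eq_bigr => i _.
by rewrite ffunE; case: ifP => iS; rewrite ?mul0r // mxE enum_rankK_in // enum_rankK.
Qed.

End Finite.

Section Vertex.
Variables (R : realType) (m n : nat).
Local Notation T := (tuples m n).

Definition supp (Q : {ffun T -> R}) : {set T} := [set t | Q t != 0].

Definition zero_marginals (d : {ffun T -> R}) : Prop :=
  \sum_t d t = 0 /\ forall (k : 'I_m) (j : 'I_n), \sum_(t : T | t k == j) d t = 0.

Definition vertex (Q : {ffun T -> R}) : Prop :=
  forall d : {ffun T -> R}, (forall t, Q t = 0 -> d t = 0) -> zero_marginals d -> d = 0.

Lemma zero_marginalsN (d : {ffun T -> R}) :
  zero_marginals d -> zero_marginals [ffun t => - d t].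
Proof.
move=> [d_sum0 d_marg0]; split=> [|k j]; under eq_bigr do rewrite ffunE.
  by rewrite sumrN d_sum0 oppr0.
by rewrite sumrN d_marg0 oppr0.
Qed.

Variable p : 'I_m -> {ffun 'I_n -> R}.

Lemma coupling_shift (Q d : {ffun T -> R}) (l : R) :
  is_coupling p Q -> zero_marginals d -> (forall t, 0 <= Q t + l * d t) ->
  is_coupling p [ffun t => Q t + l * d t].
Proof.
move=> [_ Q_sum1 Q_marg] [d_sum0 d_marg0] shift_ge0.
split=> [t|| k j]; rewrite ?ffunE //; under eq_bigr do rewrite ffunE.
  by rewrite big_split /= -mulr_sumr d_sum0 mulr0 addr0.
by rewrite big_split /= -mulr_sumr d_marg0 mulr0 addr0.
Qed.

Lemma coupling_ray_exit (Q d : {ffun T -> R}) :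
  is_coupling p Q -> (forall t, Q t = 0 -> d t = 0) -> zero_marginals d ->
  (exists t, d t < 0) ->
  exists2 l, 0 < l & is_coupling p [ffun t => Q t + l * d t] /\
    (support_size [ffun t => (Q t + l * d t)%R] < support_size Q)%N.
Proof.
move=> cQ d_supp zd neg_d; have [Q_ge0 _ _] := cQ.
have [l l_gt0 [shift_ge0 [t0 Qt0_neq0 shift_t0]]] := ray_exit Q_ge0 d_supp neg_d.
exists l => //; split; first exact: coupling_shift.
apply: proper_card; apply/properP; split.
  apply/subsetP => t; rewrite !inE ffunE; apply: contraNN => /eqP Qt0.
  by rewrite Qt0 (d_supp _ Qt0) mulr0 addr0.
by exists t0; rewrite !inE ?ffunE ?Qt0_neq0 ?shift_t0 ?eqxx.
Qed.

Lemma nonvertex_descent (Q d : {ffun T -> R}) :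
  is_coupling p Q -> (forall t, Q t = 0 -> d t = 0) -> zero_marginals d -> d != 0 ->
  exists Q', [/\ is_coupling p Q', (support_size Q' < support_size Q)%N
                & entropy Q' <= entropy Q].
Proof.
move=> cQ d_supp zd d_neq0; have [d_sum0 _] := zd.
have /existsP[t1 dt1_neq0] : [exists t, d t != 0].
  apply: contraNT d_neq0 => /existsPn d0; apply/eqP/ffunP => t.
  by rewrite ffunE; apply/eqP/negbNE/d0.
have [l1 l1_gt0 [cQ1 ltQ1]] := coupling_ray_exit cQ d_supp zd
  (ex_neg_entry d_sum0 (ex_intro _ t1 dt1_neq0)).
pose Nd := [ffun t => - d t]; have zNd : zero_marginals Nd := zero_marginalsN zd.
have Nd_supp t : Q t = 0 -> Nd t = 0 by move/d_supp => dt0; rewrite ffunE dt0 oppr0.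
have Ndt1_neq0 : Nd t1 != 0 by rewrite ffunE oppr_eq0.
have [l2 l2_gt0 [cQ2 ltQ2]] := coupling_ray_exit cQ Nd_supp zNd
  (ex_neg_entry zNd.1 (ex_intro _ t1 Ndt1_neq0)).
set Q1 := [ffun t => _] in cQ1 ltQ1; set Q2 := [ffun t => _] in cQ2 ltQ2.
have [[Q1_ge0 _ _] [Q2_ge0 _ _]] := (cQ1, cQ2).
set a := l2 / (l1 + l2); set b := l1 / (l1 + l2).
have a_gt0 : 0 < a by rewrite divr_gt0 ?addr_gt0.
have b_gt0 : 0 < b by rewrite divr_gt0 ?addr_gt0.
have ab1 : a + b = 1 by rewrite -mulrDl addrC divff // gt_eqF ?addr_gt0.
have QE : Q = [ffun t => a * Q1 t + b * Q2 t].
  apply/ffunP => t; rewrite !ffunE /a /b; field.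
  by rewrite gt_eqF ?addr_gt0.
(* [Q] lies strictly between the two exit points and entropy is concave. *)
have := entropy_concave (ltW a_gt0) (ltW b_gt0) ab1 Q1_ge0 Q2_ge0; rewrite -QE => H_conc.
have [H1_le|H1_gt] := leP (entropy Q1) (entropy Q); first by exists Q1.
by exists Q2; split=> //; nra.
Qed.

Lemma ex_vertex_le_entropy (Q : {ffun T -> R}) : is_coupling p Q ->
  exists2 Q', is_coupling p Q' /\ vertex Q' & entropy Q' <= entropy Q.
Proof.
move: {2}(support_size Q) (erefl (support_size Q)) => s.
elim/ltn_ind: s Q => s IH Q sQ cQ.
have [vQ|] := pselect (vertex Q); first by exists Q.
move=> /existsNP[d /not_implyP[d_supp /not_implyP[zd /eqP d_neq0]]].
have [Q1 [cQ1 ltQ1 leQ1]] := nonvertex_descent cQ d_supp zd d_neq0.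
have [Q' vQ' leQ'] := IH _ (leq_trans ltQ1 (eq_leq sQ)) Q1 erefl cQ1.
by exists Q' => //; apply: le_trans leQ1.
Qed.

Lemma vertex_coupling_eq (Q Q' : {ffun T -> R}) :
  is_coupling p Q -> is_coupling p Q' -> vertex Q -> supp Q = supp Q' -> Q = Q'.
Proof.
move=> [_ Q_sum1 Q_marg] [_ Q'_sum1 Q'_marg] vQ eq_supp.
have /ffunP QQ'0 : [ffun t => Q t - Q' t] = 0.
  apply: vQ => [t Qt0|]; rewrite ?ffunE.
    have : t \notin supp Q' by rewrite -eq_supp inE Qt0 eqxx.
    by rewrite inE negbK Qt0 => /eqP ->; rewrite subrr.
  split=> [|k j]; under eq_bigr do rewrite ffunE.
    by rewrite sumrB Q_sum1 Q'_sum1 subrr.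
  by rewrite sumrB Q_marg Q'_marg subrr.
by apply/ffunP => t; apply/eqP; rewrite -subr_eq0; have := QQ'0 t; rewrite !ffunE => ->.
Qed.

Lemma prod_coupling : (forall k, is_distr (p k)) ->
  is_coupling p [ffun t : T => \prod_k p k (t k)].
Proof.
move=> hp; split=> [t||k j].
- by rewrite ffunE prodr_ge0 // => k _; case: (hp k).
- under eq_bigr do rewrite ffunE.
  by rewrite -(bigA_distr_bigA (fun k j => p k j)) big1 // => k _; case: (hp k).
transitivity (\prod_i \sum_(j' | (i == k) ==> (j' == j)) p i j').
  rewrite bigA_distr_big_dep; apply: eq_big => [t|t _]; last by rewrite ffunE.
  apply/eqP/familyP => [tkj i|/(_ k)]; rewrite unfold_in /= ?eqxx; last exact/eqP.
  by apply/implyP => /eqP ->; rewrite tkj.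
rewrite (bigD1 k) //= [X in _ * X]big1 => [|i /negbTE ik]; last first.
  by rewrite (eq_bigl predT) => [|j']; [case: (hp i)|rewrite ik].
by rewrite mulr1 (big_pred1 j) // => j'; rewrite eqxx.
Qed.

End Vertex.

Lemma distr_dim_gt0 (R : realType) (n : nat) (p : {ffun 'I_n -> R}) :
  is_distr p -> (0 < n)%N.
Proof. by case: n p => // p [_]; rewrite big_ord0 => /eqP; rewrite eq_sym oner_eq0. Qed.

Lemma vertex_support_size (R : realType) (m n : nat) (Q : {ffun tuples m n -> R}) :
  vertex Q -> (support_size Q <= m * n.-1 + 1)%N.
Proof.
case: n Q => [|n] Q vQ.
  rewrite (leq_trans (max_card _)) // card_ffun !card_ord muln0; clear Q vQ.
  by case: m => [|m] //; rewrite exp0n.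
(* Total mass and the marginals at all but the last state, which the others determine. *)
pose A (t : tuples m n.+1) (c : option ('I_m * 'I_n)) : R :=
  if c is Some (k, j) then (t k == widen_ord (leqnSn n) j)%:R else 1.
have cardC : #|{: option ('I_m * 'I_n)}| = (m * n + 1)%N.
  by rewrite card_option card_prod !card_ord addn1.
rewrite leqNgt -cardC; apply/negP => /(ex_kernel_vector A) [u u_neq0 [u_supp u_A0]].
suff u0 : u = 0 by rewrite u0 eqxx in u_neq0.
apply: vQ => [t Qt0|]; first by apply: u_supp; rewrite inE Qt0 eqxx.
have u_sum0 : \sum_t u t = 0 by have := u_A0 None; under eq_bigr do rewrite mulr1.
have u_marg0 k (j : 'I_n) : \sum_(t : tuples m n.+1 | t k == widen_ord (leqnSn n) j) u t = 0.
  rewrite big_mkcond /= -[RHS](u_A0 (Some (k, j))); apply: eq_bigr => t _ /=.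
  by case: eqP; rewrite ?mulr1 ?mulr0.
split=> // k j; have [j_lt|j_ge] := ltnP j n.
  by have -> : j = widen_ord (leqnSn n) (Ordinal j_lt) by apply: val_inj.
have -> : j = ord_max by apply/val_inj/eqP; rewrite eqn_leq j_ge -ltnS ltn_ord.
move: u_sum0; rewrite (partition_big (fun t : tuples m n.+1 => t k) predT) //= big_ord_recr /=.
by rewrite big1 ?add0r // => i _; apply: u_marg0.
Qed.

Theorem lemma1 (R : realType) (m n : nat) (p : 'I_m -> {ffun 'I_n -> R})
  (hp : forall k, is_distr (p k)) :
  exists P : {ffun tuples m n -> R},
    is_min_entropy_coupling p P /\
    ((support_size P)%:Z <= (n * m)%:Z - (m%:Z - 1))%R.
Proof.
have [Q0 PQ0 _] := ex_vertex_le_entropy (prod_coupling hp).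
have [P [cP vP] Pmin] := ex_minimizer_injective_key
  (P := fun Q => is_coupling p Q /\ vertex Q) (key := @supp R m n) (@entropy R m n)
  (fun Q Q' '(conj cQ vQ) '(conj cQ' _) => vertex_coupling_eq cQ cQ' vQ)
  (ex_intro _ Q0 PQ0).
exists P; split.
  split=> // Q cQ; have [Q' PQ' leQ'] := ex_vertex_le_entropy cQ.
  exact: le_trans (Pmin _ PQ') leQ'.
have := vertex_support_size vP; rewrite -subn1.
have : (0 < m)%N -> (0 < n)%N by move=> m_gt0; apply: distr_dim_gt0 (hp (Ordinal m_gt0)).
nia.
Qed.
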